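(* Let $q$ be a self-join-free Boolean conjunctive query that has the key-join property. Then for all atoms $F,G\in q$, if $F$ attacks $G$ in the attack graph of $q$, there exists a sequence of atoms $F_0,F_1,\dots,F_\ell$ of $q$ such that $F_0=F$, $F_\ell=G$, and $\mathrm{key}(F_i)\subseteq\mathrm{vars}(F_{i-1})$ for all $i\in\{1,\dots,\ell\}$.
   Context: Every relation name has a signature $[n,k]$ ($1\le k\le n$; primary-key positions $1,\dots,k$) and a mode in $\{\mathsf{c},\mathsf{i}\}$. For an atom $F$, $\mathrm{key}(F)$ is the set of variables at primary-key positions and $\mathrm{vars}(F)$ the set of all its variables. A self-join-free Boolean conjunctive query is a finite set of atoms with pairwise distinct relation names. $q$ has the key-join property if for all $F,G\in q$, either $\mathrm{vars}(F)\cap\mathrm{vars}(G)\in\{\emptyset,\mathrm{key}(F),\mathrm{key}(G)\}$ or $\mathrm{vars}(F)\cap\mathrm{vars}(G)\supseteq\mathrm{key}(F)\cup\mathrm{key}(G)$. Attack graph: $\mathcal{K}(p)=\{\mathrm{key}(F)\to\mathrm{vars}(F)\mid F\in p\}$ (functional dependencies over variables); $q^{\mathsf{c}}$ = atoms of $q$ of mode $\mathsf{c}$; $F^{+,q}$ = set of variables $x$ of $q$ with $\mathcal{K}(q\setminus\{F\})\cup\mathcal{K}(q^{\mathsf{c}})\models\mathrm{key}(F)\to x$. $F$ attacks $G$ ($F\ne G$) iff there are atoms $F_0=F,\dots,F_m=G$ of $q$ and variables $x_i\in(\mathrm{vars}(F_{i-1})\cap\mathrm{vars}(F_i))\setminus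 F^{+,q}$ for $1\le i\le m$. *)

From mathcomp Require Import all_boot.
Set Implicit Arguments. Unset Strict Implicit. Unset Printing Implicit Defensive.

(* Conventions.
   - V : variables, C : constants, Rel : relation names (all eqTypes).
   - A term is either a variable (inl v) or a constant (inr c).
   - An atom is a pair (R, args) of a relation name and its argument list.
   - sig R = (n, k) is the signature [n,k] of R; primary-key positions are
     the first k positions.
   - mode R = true means mode c ("consistent"), false means mode i. *)

Definition term (V C : eqType) := (V + C)%type.
Definition atom (Rel V C : eqType) := (Rel * seq (term V C))%type.

Section CQ.
Variables (Rel V C : eqType).
Variable sig : Rel -> nat * nat.
Variable mode : Rel -> bool.

Local Notation atom := (atom Rel V C).

Definition rel_of (F : atom) : Rel := F.1.

Definition term_vars (s : seq (term V C)) : seq V :=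
  pmap (fun t => match t with inl v => Some v | inr _ => None end) s.

Definition key (F : atom) : seq V := term_vars (take (sig F.1).2 F.2).
Definition vars (F : atom) : seq V := term_vars F.2.

Definition wf_atom (F : atom) : Prop :=
  size F.2 = (sig F.1).1 /\ 1 <= (sig F.1).2 <= (sig F.1).1.

(* A self-join-free Boolean conjunctive query: a finite set of atoms with
   pairwise distinct relation names (uniqueness of names also makes the
   atom list duplicate-free). *)
Definition sjf_query (q : seq atom) : Prop :=
  (forall F, F \in q -> wf_atom F) /\ uniq (map rel_of q).

Definition inter_eq (A B X : seq V) : Prop :=
  forall x, (x \in A /\ x \in B) <-> x \in X.

Definition key_join (q : seq atom) : Prop :=
  forall F G, F \in q -> G \in q ->
    inter_eq (vars F) (vars G) [::] \/
    inter_eq (vars F) (vars G) (key F) \/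
    inter_eq (vars F) (vars G) (key G) \/
    (forall x, x \in key F ++ key G -> x \in vars F /\ x \in vars G).

(* Functional dependencies over variables: (lhs, rhs) means lhs -> rhs. *)
Definition fd := (seq V * seq V)%type.

Definition K (p : seq atom) : seq fd := [seq (key F, vars F) | F <- p].

(* Semantic entailment Σ |= X -> x: every relation (set of valuations of
   the variables) satisfying all dependencies of Σ satisfies X -> x. *)
Definition fd_sat (D : Type) (S : (V -> D) -> Prop) (f : fd) : Prop :=
  forall t1 t2, S t1 -> S t2 ->
    (forall y, y \in f.1 -> t1 y = t2 y) ->
    (forall y, y \in f.2 -> t1 y = t2 y).

Definition entails (Sigma : seq fd) (X : seq V) (x : V) : Prop :=
  forall (D : Type) (S : (V -> D) -> Prop),
    (forall f, f \in Sigma -> fd_sat S f) -> fd_sat S (X, [:: x]).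

Definition qc (q : seq atom) : seq atom := [seq F <- q | mode F.1].

Definition qvars (q : seq atom) : seq V := flatten (map vars q).

Definition plus_closure (q : seq atom) (F : atom) (x : V) : Prop :=
  x \in qvars q /\
  entails (K [seq G <- q | G != F] ++ K (qc q)) (key F) x.

Definition attacks (q : seq atom) (F G : atom) : Prop :=
  F != G /\
  exists (m : nat) (Fs : nat -> atom),
    [/\ Fs 0 = F, Fs m = G,
        (forall i, i <= m -> Fs i \in q) &
        (forall i, 1 <= i <= m ->
           exists x, [/\ x \in vars (Fs i.-1), x \in vars (Fs i)
                       & ~ plus_closure q F x])].

End CQ.

From mathcomp Require Import all_boot.
Set Implicit Arguments. Unset Strict Implicit.

(* Call an atom key-reachable from F if it ends a chain F = F_0, ..., F_l
   of atoms of q with key(F_i) included in vars(F_(i-1)).  Key-reachable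
   atoms are closed under the steps of an attack path: if A is key-reachable
   and shares a variable x outside F^{+,q} with B, the key-join property
   gives either key(B) included in vars(A), which extends the chain, or
   x in key(A), which lies in the vars of the predecessor of A, and we move
   one step back along the chain.  Back at A = F this is impossible, since
   key(F) is included in F^{+,q}. *)

Section KeyReach.
Variables (Rel V C : eqType) (sig : Rel -> nat * nat) (mode : Rel -> bool).
Variable q : seq (atom Rel V C).

Lemma key_sub_vars (A : atom Rel V C) : {subset key sig A <= vars A}.
Proof. by move=> x; rewrite /key /vars /term_vars !mem_pmap map_take; apply: mem_take. Qed.

Lemma key_join_shared_var A B x : key_join sig q -> A \in q -> B \in q ->
  x \in vars A -> x \in vars B -> x \in key sig A \/ {subset key sig B <= vars A}.
Proof.
move=> kj Aq Bq xA xB.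
case: (kj _ _ Aq Bq) => [E|[E|[E|E]]].
- by have /E := conj xA xB.
- by left; apply/E.
- by right=> y /E [].
- by right=> y yB; case: (E y); rewrite // mem_cat yB orbT.
Qed.

Lemma key_sub_plus_closure F x :
  F \in q -> x \in key sig F -> plus_closure sig mode q F x.
Proof.
move=> Fq xF; split.
- by apply/flattenP; exists (vars F); [apply: map_f | apply: key_sub_vars].
- by move=> D S _ t1 t2 _ _ eq_t y; rewrite inE => /eqP ->; apply: eq_t.
Qed.

Variable F : atom Rel V C.

Inductive key_reach : atom Rel V C -> Prop :=
  | key_reach_refl : key_reach F
  | key_reach_step A B : key_reach A -> B \in q ->
      {subset key sig B <= vars A} -> key_reach B.

Hypothesis Fq : F \in q.

Lemma key_reach_shared_var A B x : key_join sig q ->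
  key_reach A -> B \in q -> x \in vars A -> x \in vars B ->
  ~ plus_closure sig mode q F x -> key_reach B.
Proof.
move=> kj reachA Bq + xB xF; elim: reachA => [|P Q reachP IH Qq keyQ] xQ.
- case: (key_join_shared_var kj Fq Bq xQ xB) => [xkF | keyB].
  + by case: xF; apply: key_sub_plus_closure.
  + exact: key_reach_step key_reach_refl Bq keyB.
- case: (key_join_shared_var kj Qq Bq xQ xB) => [xkQ | keyB].
  + exact: IH (keyQ _ xkQ).
  + exact: key_reach_step (key_reach_step reachP Qq keyQ) Bq keyB.
Qed.

Lemma key_reach_chain A : key_reach A ->
  exists (l : nat) (Fs : nat -> atom Rel V C),
    [/\ Fs 0 = F, Fs l = A,
        (forall i, i <= l -> Fs i \in q) &
        (forall i, 1 <= i <= l -> forall x, x \in key sig (Fs i) -> x \in vars (Fs i.-1))].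
Proof.
elim=> [|P Q _ [l [Fs [F0 Fl Fsq Fskey]]] Qq keyQ].
  by exists 0, (fun=> F); split=> // -[|i] /andP [].
exists l.+1, (fun i => if i <= l then Fs i else Q); split=> //.
- by rewrite ltnn.
- by move=> i _; case: ifP => // il; apply: Fsq.
- move=> i /andP [i1 il1] x; case: (leqP i l) => [il | li].
  + by rewrite (leq_trans (leq_pred i) il); apply: Fskey; rewrite i1.
  + have -> : i = l.+1 by apply/eqP; rewrite eqn_leq il1.
    by rewrite /= leqnn Fl; apply: keyQ.
Qed.

End KeyReach.

Theorem lemma34 (Rel V C : eqType) (sig : Rel -> nat * nat) (mode : Rel -> bool)
  (q : seq (atom Rel V C)) :
  sjf_query sig q -> key_join sig q ->
  forall F G, F \in q -> G \in q -> attacks sig mode q F G ->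
  exists (l : nat) (Fs : nat -> atom Rel V C),
    [/\ Fs 0 = F, Fs l = G,
        (forall i, i <= l -> Fs i \in q) &
        (forall i, 1 <= i <= l -> forall x, x \in key sig (Fs i) -> x \in vars (Fs i.-1))].
Proof.
move=> _ kj F G Fq _ [_ [m [Gs [G0 Gm Gsq Gsx]]]].
suff reachGs i : i <= m -> key_reach sig q F (Gs i).
  by apply: (key_reach_chain Fq); rewrite -Gm; apply: reachGs.
elim: i => [_ | i IH lt_im]; first by rewrite G0; apply: key_reach_refl.
have [x [xGi xGi1 xF]] := Gsx i.+1 lt_im.
exact: key_reach_shared_var kj (IH (ltnW lt_im)) (Gsq _ lt_im) xGi xGi1 xF.
Qed.
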